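(* Let $G$ be a finite, simple, connected graph with $n$ vertices $v_1,\ldots,v_n$ and $m$ edges, let $a\in[0,1]$ and $b\in\mathbb{R}$, and let $\tilde{\mathbf U}$ be the generalized Grover matrix of $G$ with parameters $a,b$. Then \[ \det(\mathbf I_{2m}-u\tilde{\mathbf U})=\frac{(1-b^2u^2)^{m-n}}{\prod_{i=1}^n \deg v_i}\det\Big(\mathbf D\big\{(1+b(2a-b)u^2)\mathbf I_n+b(b-a)u^2\mathbf D\big\}-u\mathbf A_d\Big), \] where $\mathbf D$ is the $n\times n$ diagonal matrix with $\mathbf D_{v_iv_i}=\deg v_i$, and $\mathbf A_d=(A^{(d)}_{uv})_{u,v\in V(G)}$ is the $n\times n$ matrix with $A^{(d)}_{uv}=(2-\deg u)a+b\deg u$ if $u$ and $v$ are adjacent, and $A^{(d)}_{uv}=0$ otherwise.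
   Context: For a simple graph $G$, $D(G)$ denotes the set of $2m$ arcs: for each edge $uv$ both $(u,v)$ and $(v,u)$. For an arc $e=(u,v)$, $o(e)=u$, $t(e)=v$, $e^{-1}=(v,u)$; $d_v=\deg v$ is the degree of $v$. For $a\in[0,1]$, $b\in\mathbb R$, the generalized Grover matrix $\tilde{\mathbf U}=(\tilde U_{ef})_{e,f\in D(G)}$ is the $2m\times 2m$ matrix with $\tilde U_{ef}=(2/d_{t(f)}-1)a+b$ if $t(f)=o(e)$ and $f\neq e^{-1}$; $\tilde U_{ef}=(2/d_{t(f)}-1)a$ if $f=e^{-1}$; and $\tilde U_{ef}=0$ otherwise. The identity is an identity of polynomials (rational functions) in the variable $u$. *)

From HB Require Import structures.
From mathcomp Require Import all_boot all_order all_algebra.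
Set Implicit Arguments. Unset Strict Implicit. Unset Printing Implicit Defensive.
Import Order.TTheory GRing.Theory Num.Theory.
Local Open Scope ring_scope.

Definition simple_graph (V : finType) (e : rel V) : Prop :=
  symmetric e /\ irreflexive e.

Definition connected_graph (V : finType) (e : rel V) : Prop :=
  forall x y : V, connect e x y.

Definition deg (V : finType) (e : rel V) (v : V) : nat := #|[pred w | e v w]|.

Definition arcs (V : finType) (e : rel V) : {pred V * V} := [pred p : V * V | e p.1 p.2].

(* number of edges m (the 2m arcs come in pairs) *)
Definition nedges (V : finType) (e : rel V) : nat := #|arcs e| %/ 2.

Section Grover.
Variables (R : realFieldType) (V : finType) (e : rel V) (a b : R).

(* entry U_{EF} of the generalized Grover matrix, for arcs E=(o(E),t(E)), F *)
Definition grover_entry (E F : V * V) : R :=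
  if F.2 == E.1 then
    if F == (E.2, E.1) then ((2 / (deg e F.2)%:R) - 1) * a
    else ((2 / (deg e F.2)%:R) - 1) * a + b
  else 0.

Definition grover : 'M[R]_#|arcs e| :=
  \matrix_(i, j) grover_entry (enum_val i) (enum_val j).

Definition degmx : 'M[R]_#|V| :=
  \matrix_(i, j) if i == j then (deg e (enum_val i))%:R else 0.

Definition Admx : 'M[R]_#|V| :=
  \matrix_(i, j) if e (enum_val i) (enum_val j)
                 then (2 - (deg e (enum_val i))%:R) * a + b * (deg e (enum_val i))%:R
                 else 0.
End Grover.

From HB Require Import structures.
From mathcomp Require Import all_boot all_order all_algebra.
From mathcomp Require Import fingroup perm.
From mathcomp Require Import ring.
Set Implicit Arguments. Unset Strict Implicit. Unset Printing Implicit Defensive.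
Import Order.TTheory GRing.Theory Num.Theory.
Local Open Scope ring_scope.

(* Write the Grover matrix as U = S W T^T - b J, where S and T are the tail and
   head incidence matrices of the arcs, W is the diagonal of the vertex weights
   (2 / d_v - 1) a + b and J is the arc reversal. As J^2 = 1, multiplying
   1 - u U by 1 - b u J and applying Sylvester's identity
   x^n det(x - S C) = x^N det(x - C S) reduces the determinant to an n x n one,
   in which T^T S = A and T^T J S = T^T T = D. Since J pairs the 2m arcs,
   det(1 - b u J) = (1 - b^2 u^2)^m, and multiplying by det D turns the weighted
   adjacency matrix W A into A_d. *)

Lemma det_scalar_sub_mulmxC (K : comNzRingType) N n (x : K)
    (B : 'M[K]_(N, n)) (C : 'M[K]_(n, N)) :
  x ^+ n * \det (x%:M - B *m C) = x ^+ N * \det (x%:M - C *m B).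
Proof.
pose M := block_mx (x%:M : 'M_N) B C (1%:M : 'M_n).
have detM : \det M = \det (x%:M - B *m C).
  have -> : M = block_mx 1%:M B 0 1%:M *m block_mx (x%:M - B *m C) 0 C 1%:M.
    by rewrite mulmx_block !mul1mx !mul0mx !mulmx1 ?addr0 ?add0r subrK.
  by rewrite det_mulmx det_ublock det_lblock !det1 !mul1r mulr1.
have elimC : block_mx 1%:M 0 (- C) x%:M *m M = block_mx x%:M B 0 (x%:M - C *m B).
  rewrite mulmx_block !mul1mx !mul0mx ?add0r ?addr0 mul_mx_scalar mul_scalar_mx.
  by rewrite scalerN addNr mulmx1 addrC mulNmx.
have := congr1 determinant elimC.
by rewrite det_mulmx det_lblock det_ublock det1 mul1r detM !det_scalar mulrC => ->.
Qed.

Section FixedPointFreeInvolution.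
Variables (N : nat) (s : 'S_N).
Hypothesis sK : involutive s.
Hypothesis s_neq : forall i, s i != i.

Lemma perm_mx_involutive (K : pzRingType) : perm_mx s *m perm_mx s = 1%:M :> 'M[K]_N.
Proof.
rewrite -perm_mxM (_ : (s * s)%g = 1%g) ?perm_mx1 //.
by apply/permP => i; rewrite permM sK perm1.
Qed.

Lemma card_involution_lt : (#|[pred i | (s i < i)%N]| * 2)%N = N.
Proof.
have card_gt : #|[pred i | (s i < i)%N]| = #|[pred i : 'I_N | (i < s i)%N]|.
  rewrite -!sum1_card (reindex_inj (can_inj sK)) /=.
  by apply: eq_bigl => i; rewrite !inE sK.
have gt_compl : [pred i : 'I_N | (i < s i)%N] =i [predC [pred i | (s i < i)%N]].
  by move=> i; rewrite !inE ltnNge leq_eqVlt negb_or s_neq.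
by rewrite muln2 -addnn {2}card_gt (eq_card gt_compl) cardC card_ord.
Qed.

(* With [Delta] the diagonal indicator of [s i < i], [1 + c Delta J] is lower
   unitriangular and [(1 + c Delta J) (1 - c J)] is upper triangular with
   diagonal [1 - c^2 Delta], because [J^2 = 1]. *)
Lemma det_one_sub_perm_mx_involution (K : comNzRingType) (c : K) :
  \det (1%:M - c *: perm_mx s) = (1 - c ^+ 2) ^+ #|[pred i | (s i < i)%N]|.
Proof.
pose J : 'M[K]_N := perm_mx s.
pose Delta : 'M[K]_N := diag_mx (\row_i (s i < i)%N%:R).
have lower_det : \det (1%:M + c *: (Delta *m J)) = 1.
  rewrite det_trig; last first.
    apply/is_trig_mxP => i j lt_ij; rewrite mul_diag_mx !mxE (_ : i == j = false); last first.
      by apply/negbTE; rewrite neq_ltn lt_ij.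
    case: eqP => [si_j|_]; last by rewrite mulr0 mulr0 addr0.
    by rewrite si_j ltnNge (ltnW lt_ij) mul0r mulr0 addr0.
  by apply: big1 => i _; rewrite mul_diag_mx !mxE eqxx (negbTE (s_neq i)) !mulr0 addr0.
have upper : (1%:M + c *: (Delta *m J)) *m (1%:M - c *: J) = \matrix_(i, j)
    ((i == j)%:R * (1 - c ^+ 2 * (s i < i)%N%:R) - c * (s i >= i)%N%:R * (s i == j)%:R).
  rewrite mulmxDl mul1mx -scalemxAl mulmxBr mulmx1 -scalemxAr -mulmxA.
  rewrite perm_mx_involutive mulmx1 mul_diag_mx.
  apply/matrixP => i j; rewrite !mxE.
  by case: ltnP => _; case: (i == j); case: (s i == j); rewrite /= ?mulr1n ?mulr0n; ring.
have := congr1 determinant upper; rewrite det_mulmx lower_det mul1r => ->.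
rewrite -det_tr det_trig; last first.
  apply/is_trig_mxP => i j lt_ij; rewrite !mxE (_ : j == i = false); last first.
    by apply/negbTE; rewrite neq_ltn lt_ij orbT.
  case: eqP => [sj_i|_]; last by rewrite /=; ring.
  by rewrite sj_i (ltn_geF lt_ij) /=; ring.
rewrite -prodr_const [RHS]big_mkcond /=; apply: eq_bigr => i _.
by rewrite !mxE eqxx (negbTE (s_neq i)) inE; case: ltnP => _ /=; ring.
Qed.

End FixedPointFreeInvolution.

Lemma det_grover_form_reduction (K : comNzRingType) N n (S T : 'M[K]_(N, n))
    (W : 'M[K]_n) (J : 'M[K]_N) (x b : K) :
  J *m J = 1%:M ->
  let q := 1 - (b * x) ^+ 2 in
  q ^+ n * \det (1%:M - x *: (S *m W *m T^T - b *: J)) * \det (1%:M - (b * x) *: J)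
  = q ^+ N * \det (q%:M - x *: (W *m (T^T *m S - (b * x) *: (T^T *m J *m S)))).
Proof.
move=> JJ q; pose C := x *: (W *m T^T *m (1%:M - (b * x) *: J)).
have factor : (1%:M - x *: (S *m W *m T^T - b *: J)) *m (1%:M - (b * x) *: J)
    = q%:M - S *m C.
  rewrite mulmxBr mulmx1 !mulmxBl !mul1mx -!scalemxAl -!scalemxAr !mulmxA.
  rewrite mulmxBl -scalemxAl JJ mulmxBr mulmx1 -scalemxAr.
  move: (S *m W *m T^T) (S *m W *m T^T *m J) => M0 M1.
  by apply/matrixP => i j; rewrite !mxE /q; case: (i == j); rewrite /= ?mulr1n ?mulr0n; ring.
have CS : C *m S = x *: (W *m (T^T *m S - (b * x) *: (T^T *m J *m S))).
  rewrite /C -scalemxAl; congr (_ *: _).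
  by rewrite -!mulmxA mulmxBl mul1mx -scalemxAl mulmxBr -scalemxAr !mulmxA.
by rewrite -mulrA -det_mulmx factor det_scalar_sub_mulmxC CS.
Qed.

Lemma sum_eq_mulr (K : pzSemiRingType) (T : finType) (P : pred T) (x : T) (F : T -> K) :
  \sum_(y | P y) (y == x)%:R * F y = (P x)%:R * F x.
Proof.
rewrite big_mkcond (bigD1 x) //= big1 => [|y /negPf neq_yx]; last first.
  by rewrite neq_yx mul0r if_same.
by rewrite eqxx mul1r addr0; case: (P x); rewrite ?mul1r ?mul0r.
Qed.

Lemma sum_enum_val_eq_mulr (K : pzSemiRingType) (T : finType) (x : T) (F : T -> K) :
  \sum_(v < #|T|) (enum_val v == x)%:R * F (enum_val v) = F x.
Proof. by rewrite -(big_enum_val (fun y => (y == x)%:R * F y)) sum_eq_mulr mul1r. Qed.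

Section Arcs.
Variables (V : finType) (e : rel V).
Hypotheses (e_sym : symmetric e) (e_irr : irreflexive e).
Local Notation N := #|arcs e|.
Local Notation n := #|V|.

Lemma sum_arcs (K : nmodType) (F : V -> V -> K) :
  \sum_(i < N) F (enum_val i).1 (enum_val i).2 = \sum_u \sum_(w | e u w) F u w.
Proof. by rewrite -(big_enum_val (fun p => F p.1 p.2)) pair_big_dep. Qed.

Lemma arc_swap_in (i : 'I_N) : ((enum_val i).2, (enum_val i).1) \in arcs e.
Proof. by rewrite unfold_in /= e_sym; apply: (enum_valP i). Qed.

Definition arc_rev (i : 'I_N) : 'I_N :=
  enum_rank_in (enum_valP i) ((enum_val i).2, (enum_val i).1).

Lemma enum_val_arc_rev i : enum_val (arc_rev i) = ((enum_val i).2, (enum_val i).1).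
Proof. exact: enum_rankK_in (arc_swap_in i). Qed.

Lemma arc_revK : involutive arc_rev.
Proof.
by move=> i; apply: enum_val_inj; rewrite !enum_val_arc_rev; case: (enum_val i).
Qed.

Lemma arc_rev_neq i : arc_rev i != i.
Proof.
apply/eqP => rev_i; have := enum_val_arc_rev i; rewrite rev_i => /(congr1 fst) /= eq12.
by have := enum_valP i; rewrite unfold_in /= -eq12 e_irr.
Qed.

Definition arc_rev_perm : 'S_N := perm (can_inj arc_revK).

Lemma arc_rev_permK : involutive arc_rev_perm.
Proof. by move=> i; rewrite !permE arc_revK. Qed.

Lemma arc_rev_perm_neq i : arc_rev_perm i != i.
Proof. by rewrite permE arc_rev_neq. Qed.

Lemma nedges_rev_lt : nedges e = #|[pred i | (arc_rev_perm i < i)%N]|.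
Proof.
by rewrite /nedges -[X in (X %/ 2)%N](card_involution_lt arc_rev_permK arc_rev_perm_neq) mulnK.
Qed.

Lemma card_arcs : N = (nedges e * 2)%N.
Proof. by rewrite nedges_rev_lt (card_involution_lt arc_rev_permK arc_rev_perm_neq). Qed.

Definition rev_mx (K : pzSemiRingType) : 'M[K]_N := perm_mx arc_rev_perm.

Lemma rev_mxK (K : pzRingType) : rev_mx K *m rev_mx K = 1%:M.
Proof. exact: (perm_mx_involutive arc_rev_permK). Qed.

Lemma det_one_sub_rev_mx (K : comNzRingType) (c : K) :
  \det (1%:M - c *: rev_mx K) = (1 - c ^+ 2) ^+ nedges e.
Proof.
by rewrite (det_one_sub_perm_mx_involution arc_rev_permK arc_rev_perm_neq) nedges_rev_lt.
Qed.

Definition tail_mx (K : pzSemiRingType) : 'M[K]_(N, n) :=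
  \matrix_(i, v) ((enum_val i).1 == enum_val v)%:R.
Definition head_mx (K : pzSemiRingType) : 'M[K]_(N, n) :=
  \matrix_(i, v) ((enum_val i).2 == enum_val v)%:R.
Definition adj_mx (K : pzSemiRingType) : 'M[K]_n :=
  \matrix_(v, w) (e (enum_val v) (enum_val w))%:R.

Lemma rev_mx_tail (K : pzSemiRingType) : rev_mx K *m tail_mx K = head_mx K.
Proof.
by apply/matrixP => i v; rewrite /rev_mx -row_permE !mxE permE enum_val_arc_rev.
Qed.

Lemma head_tail_adjacency (K : pzSemiRingType) : (head_mx K)^T *m tail_mx K = adj_mx K.
Proof.
apply/matrixP => v w; rewrite !mxE.
under eq_bigr do rewrite !mxE.
rewrite (sum_arcs (fun x y => (y == enum_val v)%:R * (x == enum_val w)%:R)).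
under eq_bigr do rewrite sum_eq_mulr commr_nat.
by rewrite sum_eq_mulr mul1r e_sym.
Qed.

Lemma head_gram (K : pzSemiRingType) :
  (head_mx K)^T *m head_mx K = diag_mx (\row_v (deg e (enum_val v))%:R).
Proof.
apply/matrixP => v w; rewrite !mxE.
under eq_bigr do rewrite !mxE.
rewrite (sum_arcs (fun _ y => (y == enum_val v)%:R * (y == enum_val w)%:R)).
under eq_bigr do rewrite sum_eq_mulr.
rewrite -big_distrl /= -natr_sum (inj_eq enum_val_inj) mulr_natr.
congr (_%:R *+ _); rewrite /deg -sum1_card [RHS]big_mkcond /=.
by apply: eq_bigr => u _; rewrite inE e_sym; case: e.
Qed.

Section GroverMatrix.
Variables (R : realFieldType) (a b : R).

Definition grover_weight (v : V) : R := (2 / (deg e v)%:R - 1) * a + b.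

Lemma grover_decomposition (K : nzRingType) (f : {rmorphism R -> K}) :
  map_mx f (grover e a b) = tail_mx K *m diag_mx (\row_v f (grover_weight (enum_val v)))
                              *m (head_mx K)^T - f b *: rev_mx K.
Proof.
apply/matrixP => i j; rewrite mul_mx_diag !mxE.
under eq_bigr do rewrite !mxE eq_sym -mulrA.
rewrite (sum_enum_val_eq_mulr _ (fun y => f (grover_weight y) * (_ == y)%:R)) permE.
rewrite -(inj_eq enum_val_inj) enum_val_arc_rev /grover_entry /grover_weight.
case: (enum_val i) (enum_val j) => [x1 x2] [y1 y2] /=; rewrite (eq_sym (x2, x1)).
have [-> | ne_y2x1] := eqVneq y2 x1; last first.
  by rewrite xpair_eqE (negbTE ne_y2x1) andbF rmorph0 !mulr0 subr0.
by case: eqP => _; rewrite ?rmorphD !mulr1 ?mulr0 ?subr0 ?addrK.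
Qed.

(* [2 / 0 = 0] in a field, so the identity fails for isolated vertices. *)
Lemma deg_mul_grover_weight v : deg e v != 0%N ->
  (deg e v)%:R * grover_weight v = (2 - (deg e v)%:R) * a + b * (deg e v)%:R.
Proof. by move=> deg_neq0; rewrite /grover_weight; field; rewrite pnatr_eq0. Qed.

Lemma map_degmx (K : nzRingType) (f : {rmorphism R -> K}) :
  map_mx f (degmx R e) = diag_mx (\row_v (deg e (enum_val v))%:R).
Proof. by apply/matrixP => v w; rewrite !mxE; case: eqP; rewrite ?rmorph_nat ?rmorph0. Qed.

Lemma det_map_degmx (K : comNzRingType) (f : {rmorphism R -> K}) :
  \det (map_mx f (degmx R e)) = f (\prod_v (deg e v)%:R).
Proof.
rewrite map_degmx det_diag rmorph_prod (big_enum_val (fun v => f (deg e v)%:R)).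
by apply: eq_bigr => v _; rewrite mxE rmorph_nat.
Qed.

Lemma degmx_mul_vertex_form (K : comNzRingType) (f : {rmorphism R -> K}) (x : K) :
  let D := map_mx f (degmx R e) in
  let W := diag_mx (\row_v f (grover_weight (enum_val v))) in
  D *m ((1 - (f b * x) ^+ 2)%:M - x *: (W *m (adj_mx K - (f b * x) *: D)))
  = D *m ((1 + f (b * (2 * a - b)) * x ^+ 2) *: 1%:M + (f (b * (b - a)) * x ^+ 2) *: D)
    - x *: map_mx f (Admx e a b).
Proof.
move=> D W; rewrite /D map_degmx; apply/matrixP => v w; rewrite !mul_diag_mx !mxE.
set d := deg e (enum_val v).
have dW : d != 0%N -> d%:R * f (grover_weight (enum_val v)) = f ((2 - d%:R) * a + b * d%:R).
  by move=> d_neq0; rewrite -(rmorph_nat f) -rmorphM deg_mul_grover_weight.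
have [<- | neq_vw] := eqVneq v w.
  rewrite e_irr /= rmorph0 !mulr1n.
  have [-> | d_neq0] := eqVneq d 0%N; first by rewrite mulr0n; ring.
  transitivity (d%:R * (1 - (f b * x) ^+ 2)
                + f b * x ^+ 2 * d%:R * (d%:R * f (grover_weight (enum_val v)))); first by ring.
  by rewrite dW // !(rmorphD, rmorphB, rmorphM, rmorph_nat, rmorph1); ring.
rewrite /= !mulr0n !mulr0 !addr0 subr0.
case: ifP => [adj_vw | _]; last by rewrite rmorph0 /=; ring.
have d_neq0 : d != 0%N.
  by apply: contraTneq adj_vw => /card0_eq/(_ (enum_val w)); rewrite inE => ->.
transitivity (- x * (d%:R * f (grover_weight (enum_val v)))); first by rewrite /=; ring.
by rewrite dW //; ring.
Qed.

End GroverMatrix.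
End Arcs.

Theorem theorem5 (R : realFieldType) (V : finType) (e : rel V) (a b : R) :
  simple_graph e -> connected_graph e -> 0 <= a <= 1 ->
  let n := #|V| in
  let m := nedges e in
  let U := map_mx polyC (grover e a b) in
  let D := map_mx polyC (degmx R e) in
  let Ad := map_mx polyC (Admx e a b) in
  let q := 1 - (b ^+ 2)%:P * 'X^2 : {poly R} in
  (\prod_(v : V) (deg e v)%:R)%:P * \det (1%:M - 'X *: U) * q ^+ n
  = q ^+ m * \det (D *m ((1 + (b * (2 * a - b))%:P * 'X^2) *: 1%:M
                          + ((b * (b - a))%:P * 'X^2) *: D) - 'X *: Ad).
Proof.
move=> [e_sym e_irr] _ _ n m U D Ad q.
have q_eq : 1 - (b%:P * 'X) ^+ 2 = q by rewrite exprMn -polyC_exp.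
have q_neq0 : q != 0.
  apply/eqP => /(congr1 (horner^~ 0)).
  by rewrite !hornerE /= !mulr0 subr0; apply/eqP/oner_neq0.
pose W : 'M_n := diag_mx (\row_v (grover_weight e a b (enum_val v))%:P).
have /= := det_grover_form_reduction (tail_mx e _) (head_mx e _) W 'X b%:P (rev_mxK e_sym _).
rewrite -(grover_decomposition e_sym a b polyC) det_one_sub_rev_mx // head_tail_adjacency //.
rewrite -mulmxA rev_mx_tail // head_gram // -(map_degmx e polyC) q_eq.
have qN : q ^+ #|arcs e| = q ^+ m * q ^+ m by rewrite card_arcs // muln2 -addnn exprD.
rewrite qN => arc_form.
have vertex_det : q ^+ n * \det (1%:M - 'X *: U) = q ^+ m * \det (q%:M - 'X *:
    (W *m (adj_mx e _ - (b%:P * 'X) *: D))).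
  by apply: (mulIf (expf_neq0 m q_neq0)); rewrite arc_form mulrAC.
have /= := degmx_mul_vertex_form e_irr a b polyC 'X; rewrite q_eq -/D -/W -/Ad => vertex.
rewrite -vertex det_mulmx -(det_map_degmx e polyC) -/D.
by rewrite -mulrA [_ * q ^+ n]mulrC vertex_det mulrCA.
Qed.
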